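(* Let $M$ be a finite generic metric space and let $0<r<\min\{s(M)/4,\ e(M)/4,\ t(M)/6\}$. Then the sphere $\{Y\in\mathcal{M}: d_{GH}(M,Y)=r\}$ in $\mathcal{M}$ is path connected (as a subspace of the metric space $(\mathcal{M},d_{GH})$).
   Context: For a metric space $M$ with $\#M\ge3$: $s(M)=\inf\{|xx'|: x\ne x'\}$; $t(M)=\inf\{|xx'|+|x'x''|-|xx''|: x,x',x''\text{ pairwise distinct}\}$; $e(M)=\inf\{\operatorname{dis}f: f\colon M\to M \text{ bijective}, f\ne\mathrm{id}\}$, where $\operatorname{dis}f=\sup_{x,x'}||xx'|-|f(x)f(x')||$. $M$ is called generic if $\#M\ge3$ and $s(M),t(M),e(M)$ are all positive. $\mathcal{M}$ denotes the set of isometry classes of compact metric spaces endowed with the Gromov–Hausdorff distance $d_{GH}$ (a metric on $\mathcal{M}$): $d_{GH}(X,Y)$ is the infimum of $r$ such that there exist a metric space $Z$ and subsets $X',Y'\subset Z$ isometric to $X,Y$ with Hausdorff distance $d_H(X',Y')\le r$. *)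

From Stdlib Require Import Reals List.
From Coquelicot Require Import Coquelicot.
Open Scope R_scope.

Record MetricSpace := {
  carrier :> Type;
  dist : carrier -> carrier -> R;
  dist_eq0 : forall x y, dist x y = 0 <-> x = y;
  dist_sym : forall x y, dist x y = dist y x;
  dist_tri : forall x y z, dist x z <= dist x y + dist y z
}.
Arguments dist {m} x y.

(** Sequential compactness (equivalent to compactness for metric spaces). *)
Definition compact_space (X : MetricSpace) : Prop :=
  forall u : nat -> X, exists (phi : nat -> nat) (x : X),
    (forall n, (phi n < phi (S n))%nat) /\
    (forall eps, 0 < eps -> exists N, forall n, (N <= n)%nat ->
        dist (u (phi n)) x < eps).

(** Elements of the Gromov–Hausdorff space: nonempty compact metric spaces. *)
Definition compact_metric_space (X : MetricSpace) : Prop :=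
  inhabited X /\ compact_space X.

Definition finite_space (X : MetricSpace) : Prop :=
  exists l : list X, NoDup l /\ forall x : X, In x l.

Definition isometric_embedding {X Z : MetricSpace} (f : X -> Z) : Prop :=
  forall x x', dist (f x) (f x') = dist x x'.

(** d_H(A,B) <= r for subsets A, B of Z
    (i.e. inf { r | A ⊂ U_r(B), B ⊂ U_r(A)} <= r). *)
Definition hausdorff_le (Z : MetricSpace) (A B : Z -> Prop) (r : R) : Prop :=
  (forall a, A a -> forall eps, 0 < eps -> exists b, B b /\ dist a b < r + eps) /\
  (forall b, B b -> forall eps, 0 < eps -> exists a, A a /\ dist b a < r + eps).

Definition dGH (X Y : MetricSpace) : Rbar :=
  Glb_Rbar (fun r => exists (Z : MetricSpace) (f : X -> Z) (g : Y -> Z),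
    isometric_embedding f /\ isometric_embedding g /\
    hausdorff_le Z (fun z => exists x, z = f x) (fun z => exists y, z = g y) r).

Definition sM (M : MetricSpace) : Rbar :=
  Glb_Rbar (fun v => exists x x' : M, x <> x' /\ v = dist x x').

Definition tM (M : MetricSpace) : Rbar :=
  Glb_Rbar (fun v => exists x x' x'' : M, x <> x' /\ x' <> x'' /\ x <> x'' /\
     v = dist x x' + dist x' x'' - dist x x'').

Definition dis {M : MetricSpace} (f : M -> M) : Rbar :=
  Lub_Rbar (fun v => exists x x' : M, v = Rabs (dist x x' - dist (f x) (f x'))).

Definition eM (M : MetricSpace) : Rbar :=
  Glb_Rbar (fun v => exists f : M -> M,
     (forall x y, f x = f y -> x = y) /\ (forall y, exists x, f x = y) /\
     (exists x, f x <> x) /\ dis f = Finite v).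

Definition at_least_three (M : MetricSpace) : Prop :=
  exists x x' x'' : M, x <> x' /\ x' <> x'' /\ x <> x''.

Definition generic (M : MetricSpace) : Prop :=
  at_least_three M /\ Rbar_lt 0 (sM M) /\ Rbar_lt 0 (tM M) /\ Rbar_lt 0 (eM M).

(** Points of the
    quotient are represented by representatives; equality in the quotient
    is d_GH = 0. *)
Definition gh_sphere (M : MetricSpace) (r : R) (Y : MetricSpace) : Prop :=
  compact_metric_space Y /\ dGH M Y = Finite r.

Definition gh_path_connected (S : MetricSpace -> Prop) : Prop :=
  forall X Y : MetricSpace, S X -> S Y ->
  exists gamma : R -> MetricSpace,
    (forall t, 0 <= t <= 1 -> S (gamma t)) /\
    (forall t, 0 <= t <= 1 -> forall eps, 0 < eps -> exists delta, 0 < delta /\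
       forall s, 0 <= s <= 1 -> Rabs (s - t) < delta ->
         Rbar_lt (dGH (gamma s) (gamma t)) (Finite eps)) /\
    dGH (gamma 0) X = Finite 0 /\ dGH (gamma 1) Y = Finite 0.

(** Because s(M) and e(M) exceed 4r, every compact Y with d_GH(M,Y) = r carries a
    surjection c : Y -> M of distortion at most 2r: an almost optimal correspondence is the
    graph of such a map, and any two such maps agree, since comparing them yields a
    bijection of M of distortion below e(M), i.e. the identity.

    Fix p in M and y0 in Y with c y0 = p. Adjoin to Y a point at distance max(l, |y0 y|)
    from each y, let l grow from 0 to 2r, then move the metric of Y linearly towards
    |c y c y'|. The limit no longer depends on Y: it is M with a point at distance
    max(2r, |p m|) from m. All along, d_GH to M stays r: at most r because c, extended by
    sending the new point to p, is still a correspondence of distortion 2r; at least r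
    because deleting the new point gives back Y in the first phase, while in the second the
    new point and y0 are exactly 2r apart, which no correspondence of distortion below 2r
    with the 4r-separated space M can accommodate. Joining the deformations of X and Y
    gives a path from X to Y. *)

From Stdlib Require Import Reals Lra Lia Classical ClassicalEpsilon List FinFun.
From Coquelicot Require Import Coquelicot.
Open Scope R_scope.

Lemma dist_refl (X : MetricSpace) (x : X) : dist x x = 0.
Proof. now apply dist_eq0. Qed.

Lemma dist_ge0 (X : MetricSpace) (x y : X) : 0 <= dist x y.
Proof.
  pose proof (dist_tri X x y x) as H.
  rewrite dist_refl, (dist_sym X y x) in H. lra.
Qed.

Section GlbRbar.
Variable E : R -> Prop.

Lemma Glb_Rbar_le_elt x : E x -> Rbar_le (Glb_Rbar E) (Finite x).
Proof. apply (Glb_Rbar_correct E). Qed.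

Lemma Glb_Rbar_ge a : (forall x, E x -> a <= x) -> Rbar_le (Finite a) (Glb_Rbar E).
Proof. intros H. apply (Glb_Rbar_correct E). exact H. Qed.

Lemma Glb_Rbar_approx l : Glb_Rbar E = Finite l ->
  forall eps, 0 < eps -> exists x, E x /\ x < l + eps.
Proof.
  intros Hl eps Heps. apply NNPP; intros Hno.
  assert (Hge : Rbar_le (Finite (l + eps)) (Glb_Rbar E)).
  { apply Glb_Rbar_ge. intros x Hx. apply Rnot_lt_le. intros Hlt. apply Hno. now exists x. }
  rewrite Hl in Hge. simpl in Hge. lra.
Qed.

Lemma Glb_Rbar_finite x0 m : E x0 -> (forall x, E x -> m <= x) ->
  Glb_Rbar E = Finite (real (Glb_Rbar E)).
Proof.
  intros Hx0 Hm. pose proof (Glb_Rbar_le_elt x0 Hx0) as Hup.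
  pose proof (Glb_Rbar_ge m Hm) as Hlow.
  destruct (Glb_Rbar E); simpl in *; easy.
Qed.

Lemma Finite_lt_Glb_Rbar a : Rbar_lt (Finite a) (Glb_Rbar E) ->
  exists b, a < b /\ forall x, E x -> b <= x.
Proof.
  intros Ha. destruct (Glb_Rbar E) as [l | |] eqn:Hl; simpl in Ha; try easy.
  - exists l. split; [exact Ha|]. intros x Hx.
    pose proof (Glb_Rbar_le_elt x Hx) as H. now rewrite Hl in H.
  - exists (a + 1). split; [lra|]. intros x Hx.
    pose proof (Glb_Rbar_le_elt x Hx) as H. now rewrite Hl in H.
Qed.
End GlbRbar.

Lemma Lub_Rbar_bounded (E : R -> Prop) x0 k : E x0 -> (forall x, E x -> x <= k) ->
  exists v, Lub_Rbar E = Finite v /\ v <= k.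
Proof.
  intros Hx0 Hk. destruct (Lub_Rbar_correct E) as [Hub Hleast].
  pose proof (Hub x0 Hx0) as Hlow. pose proof (Hleast (Finite k) Hk) as Hup.
  destruct (Lub_Rbar E) as [v| |]; simpl in *; try easy. now exists v.
Qed.

(** * Gromov-Hausdorff distance through correspondences *)

Definition GH_bound (X Y : MetricSpace) (rho : R) : Prop :=
  exists (Z : MetricSpace) (f : X -> Z) (g : Y -> Z),
    isometric_embedding f /\ isometric_embedding g /\
    hausdorff_le Z (fun z => exists x, z = f x) (fun z => exists y, z = g y) rho.

Lemma dGH_GH_bound (X Y : MetricSpace) : dGH X Y = Glb_Rbar (GH_bound X Y).
Proof. reflexivity. Qed.

Lemma hausdorff_le_sym (Z : MetricSpace) (A B : Z -> Prop) rho :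
  hausdorff_le Z A B rho -> hausdorff_le Z B A rho.
Proof. now intros [HA HB]. Qed.

Lemma dGH_sym (X Y : MetricSpace) : dGH X Y = dGH Y X.
Proof.
  rewrite !dGH_GH_bound. apply Glb_Rbar_eqset.
  intros rho; split; intros (Z & f & g & Hf & Hg & H);
    exists Z, g, f; auto using hausdorff_le_sym.
Qed.

Lemma GH_bound_ge0 (X Y : MetricSpace) rho : inhabited X -> GH_bound X Y rho -> 0 <= rho.
Proof.
  intros [x] (Z & f & g & _ & _ & Hfg & _).
  apply Rle_plus_epsilon. intros eps Heps.
  destruct (Hfg (f x) (ex_intro _ x eq_refl) eps Heps) as [z [_ Hz]].
  pose proof (dist_ge0 Z (f x) z). lra.
Qed.

Definition correspondence {A B : Type} (Rl : A -> B -> Prop) : Prop :=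
  (forall a, exists b, Rl a b) /\ (forall b, exists a, Rl a b).

Definition distortion_le {A B : MetricSpace} (Rl : A -> B -> Prop) (k : R) : Prop :=
  forall a a' b b', Rl a b -> Rl a' b' -> Rabs (dist a a' - dist b b') <= k.

Definition option_lift {A B : Type} (Rl : A -> B -> Prop) (wa : option A) (wb : option B) :
  Prop :=
  match wa, wb with
  | Some a, Some b => Rl a b
  | None, None => True
  | _, _ => False
  end.

Lemma correspondence_option_lift {A B : Type} (Rl : A -> B -> Prop) :
  correspondence Rl -> correspondence (option_lift Rl).
Proof.
  intros [HA HB]. split.
  - intros [a|]; [|now exists None]. destruct (HA a) as [b Hb]. now exists (Some b).
  - intros [b|]; [|now exists None]. destruct (HB b) as [a Ha]. now exists (Some a).
Qed.

Lemma correspondence_of_GH_bound (A B : MetricSpace) rho eps :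
  GH_bound A B rho -> 0 < eps ->
  exists Rl : A -> B -> Prop, correspondence Rl /\ distortion_le Rl (2 * rho + 2 * eps).
Proof.
  intros (Z & f & g & Hf & Hg & HAB & HBA) Heps.
  exists (fun a b => dist (f a) (g b) < rho + eps). split; [split|].
  - intros a. destruct (HAB (f a) (ex_intro _ a eq_refl) eps Heps) as [z [[b ->] Hz]].
    now exists b.
  - intros b. destruct (HBA (g b) (ex_intro _ b eq_refl) eps Heps) as [z [[a ->] Hz]].
    exists a. now rewrite dist_sym.
  - intros a a' b b' Hab Hab'. apply Rabs_le_between. rewrite <- (Hf a a'), <- (Hg b b').
    pose proof (dist_tri Z (f a) (g b) (f a')). pose proof (dist_tri Z (g b) (g b') (f a')).
    pose proof (dist_tri Z (g b) (f a) (g b')). pose proof (dist_tri Z (f a) (f a') (g b')).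
    pose proof (dist_sym Z (f a) (g b)). pose proof (dist_sym Z (f a') (g b')).
    lra.
Qed.

Section Gluing.
Variables (A B : MetricSpace) (Rl : A -> B -> Prop) (rho : R).
Hypotheses (Hrho : 0 < rho) (HRl : correspondence Rl) (Hdis : distortion_le Rl (2 * rho)).

Definition glue_values (a : A) (b : B) (v : R) : Prop :=
  exists a' b', Rl a' b' /\ v = dist a a' + rho + dist b' b.

Definition glue_dist (a : A) (b : B) : R := real (Glb_Rbar (glue_values a b)).

Lemma glue_values_ge a b v : glue_values a b v -> rho <= v.
Proof.
  intros (a' & b' & _ & ->).
  pose proof (dist_ge0 _ a a'). pose proof (dist_ge0 _ b' b). lra.
Qed.

Lemma glue_dist_Finite a b : Glb_Rbar (glue_values a b) = Finite (glue_dist a b).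
Proof.
  destruct (proj1 HRl a) as [b' Hb'].
  apply (Glb_Rbar_finite _ (dist a a + rho + dist b' b) rho); [|apply glue_values_ge].
  now exists a, b'.
Qed.

Lemma glue_dist_ge a b : rho <= glue_dist a b.
Proof.
  pose proof (Glb_Rbar_ge _ rho (glue_values_ge a b)) as H.
  now rewrite glue_dist_Finite in H.
Qed.

Lemma glue_dist_le a b a' b' : Rl a' b' -> glue_dist a b <= dist a a' + rho + dist b' b.
Proof.
  intros H. assert (Hv : glue_values a b (dist a a' + rho + dist b' b)) by now exists a', b'.
  pose proof (Glb_Rbar_le_elt _ _ Hv) as Hle. now rewrite glue_dist_Finite in Hle.
Qed.

Lemma glue_dist_approx a b eps : 0 < eps ->
  exists a' b', Rl a' b' /\ dist a a' + rho + dist b' b < glue_dist a b + eps.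
Proof.
  intros Heps. destruct (Glb_Rbar_approx _ _ (glue_dist_Finite a b) eps Heps)
    as [v [(a' & b' & H & ->) Hv]].
  now exists a', b'.
Qed.

Lemma glue_dist_tri_l a a2 b : glue_dist a b <= dist a a2 + glue_dist a2 b.
Proof.
  apply Rle_plus_epsilon. intros eps Heps.
  destruct (glue_dist_approx a2 b eps Heps) as (a' & b' & H & Hlt).
  pose proof (glue_dist_le a b a' b' H). pose proof (dist_tri _ a a2 a'). lra.
Qed.

Lemma glue_dist_tri_r a b b2 : glue_dist a b <= glue_dist a b2 + dist b2 b.
Proof.
  apply Rle_plus_epsilon. intros eps Heps.
  destruct (glue_dist_approx a b2 eps Heps) as (a' & b' & H & Hlt).
  pose proof (glue_dist_le a b a' b' H). pose proof (dist_tri _ b' b2 b). lra.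
Qed.

Lemma dist_le_glue_l a a2 b : dist a a2 <= glue_dist a b + glue_dist a2 b.
Proof.
  apply Rle_plus_epsilon. intros eps Heps.
  destruct (glue_dist_approx a b (eps / 2)) as (a' & b' & H & Hlt); [lra|].
  destruct (glue_dist_approx a2 b (eps / 2)) as (a'' & b'' & H' & Hlt'); [lra|].
  pose proof (Hdis _ _ _ _ H H') as Hd. apply Rabs_le_between in Hd.
  pose proof (dist_tri _ a a' a2). pose proof (dist_tri _ a' a'' a2).
  pose proof (dist_tri _ b' b b''). rewrite (dist_sym _ a'' a2), (dist_sym _ b b'') in *.
  lra.
Qed.

Lemma dist_le_glue_r a b b2 : dist b b2 <= glue_dist a b + glue_dist a b2.
Proof.
  apply Rle_plus_epsilon. intros eps Heps.
  destruct (glue_dist_approx a b (eps / 2)) as (a' & b' & H & Hlt); [lra|].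
  destruct (glue_dist_approx a b2 (eps / 2)) as (a'' & b'' & H' & Hlt'); [lra|].
  pose proof (Hdis _ _ _ _ H H') as Hd. apply Rabs_le_between in Hd.
  pose proof (dist_tri _ b b' b2). pose proof (dist_tri _ b' b'' b2).
  pose proof (dist_tri _ a' a a''). rewrite (dist_sym _ b b'), (dist_sym _ a' a) in *.
  lra.
Qed.

Definition glued_dist (x y : A + B) : R :=
  match x, y with
  | inl a, inl a' => dist a a'
  | inr b, inr b' => dist b b'
  | inl a, inr b | inr b, inl a => glue_dist a b
  end.

Lemma glued_dist_eq0 x y : glued_dist x y = 0 <-> x = y.
Proof.
  destruct x as [a|b], y as [a'|b']; simpl.
  - rewrite dist_eq0. split; [now intros ->|now intros [= ->]].
  - pose proof (glue_dist_ge a b'). split; [lra|discriminate].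
  - pose proof (glue_dist_ge a' b). split; [lra|discriminate].
  - rewrite dist_eq0. split; [now intros ->|now intros [= ->]].
Qed.

Lemma glued_dist_sym x y : glued_dist x y = glued_dist y x.
Proof. destruct x, y; simpl; auto using dist_sym. Qed.

Lemma glued_dist_tri x y z : glued_dist x z <= glued_dist x y + glued_dist y z.
Proof.
  destruct x as [a|b], y as [a2|b2], z as [a3|b3]; simpl.
  - apply dist_tri.
  - apply glue_dist_tri_l.
  - apply dist_le_glue_l.
  - apply glue_dist_tri_r.
  - rewrite (dist_sym _ a2 a3). pose proof (glue_dist_tri_l a3 a2 b). lra.
  - apply dist_le_glue_r.
  - pose proof (glue_dist_tri_r a3 b b2). rewrite (dist_sym _ b2 b) in *. lra.
  - apply dist_tri.
Qed.

Definition glued_space : MetricSpace :=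
  Build_MetricSpace (A + B) glued_dist glued_dist_eq0 glued_dist_sym glued_dist_tri.

Lemma GH_bound_of_correspondence : GH_bound A B rho.
Proof.
  exists glued_space, inl, inr. split; [|split]; [easy|easy|split].
  - intros z [a ->] eps Heps. destruct (proj1 HRl a) as [b Hb].
    exists (inr b). split; [now exists b|]. simpl.
    pose proof (glue_dist_le a b a b Hb). rewrite !dist_refl in *. lra.
  - intros z [b ->] eps Heps. destruct (proj2 HRl b) as [a Ha].
    exists (inl a). split; [now exists a|]. simpl.
    pose proof (glue_dist_le a b a b Ha). rewrite !dist_refl in *. lra.
Qed.
End Gluing.

Lemma dGH_le_correspondence (A B : MetricSpace) (Rl : A -> B -> Prop) rho :
  0 < rho -> correspondence Rl -> distortion_le Rl (2 * rho) ->
  Rbar_le (dGH A B) (Finite rho).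
Proof.
  intros Hrho HRl Hdis. apply Glb_Rbar_le_elt. now apply (GH_bound_of_correspondence A B Rl).
Qed.

Lemma dGH_refl (X : MetricSpace) : inhabited X -> dGH X X = Finite 0.
Proof.
  intros Hinh.
  assert (Hle : forall rho, 0 < rho -> Rbar_le (dGH X X) (Finite rho)).
  { intros rho Hrho. apply (dGH_le_correspondence X X eq); [easy|split; eauto|].
    intros a a' b b' <- <-. rewrite Rminus_diag, Rabs_R0. lra. }
  assert (Hge : Rbar_le (Finite 0) (dGH X X)).
  { apply Glb_Rbar_ge. intros rho. now apply GH_bound_ge0. }
  destruct (dGH X X) as [d| |]; simpl in *; try easy.
  - f_equal. apply Rle_antisym; [|easy].
    apply Rle_plus_epsilon. intros eps Heps. specialize (Hle eps Heps). simpl in Hle. lra.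
  - now specialize (Hle 1 Rlt_0_1).
Qed.

Lemma dGH_ge_of_gap (M W : MetricSpace) r (a b : W) :
  (forall m m' : M, m <> m' -> 4 * r < dist m m') -> dist a b = 2 * r ->
  Rbar_le (Finite r) (dGH M W).
Proof.
  intros Hsep Hab. apply Glb_Rbar_ge. intros rho Hrho. apply Rnot_lt_le. intros Hlt.
  destruct (correspondence_of_GH_bound _ _ _ ((r - rho) / 2) Hrho) as (Rl & [_ HW] & Hdis);
    [lra|].
  destruct (HW a) as [m Hm], (HW b) as [m' Hm'].
  specialize (Hdis m m' a b Hm Hm'). rewrite Hab in Hdis. apply Rabs_le_between in Hdis.
  destruct (classic (m = m')) as [<-|Hne].
  - rewrite dist_refl in Hdis. lra.
  - specialize (Hsep m m' Hne). lra.
Qed.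

(** * Optimal surjections onto M *)

Definition map_distortion_le {X M : MetricSpace} (c : X -> M) (k : R) : Prop :=
  forall x y, Rabs (dist x y - dist (c x) (c y)) <= k.

Lemma map_distortion_le_weaken (X M : MetricSpace) (c : X -> M) k k' :
  k <= k' -> map_distortion_le c k -> map_distortion_le c k'.
Proof. intros Hk Hc x y. specialize (Hc x y). lra. Qed.

Section OptimalSurjection.
Variables (M : MetricSpace) (s0 e0 : R).
Hypothesis Hsep : forall m m' : M, m <> m' -> s0 <= dist m m'.
Hypothesis Hrigid : forall (f : M -> M) v, Injective f -> Surjective f ->
  (exists m, f m <> m) -> dis f = Finite v -> e0 <= v.

Lemma bijection_eq_id (f : M -> M) k : Injective f -> Surjective f ->
  map_distortion_le f k -> k < e0 -> forall m, f m = m.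
Proof.
  intros Hinj Hsurj Hdis Hk m. apply NNPP. intros Hm.
  destruct (Lub_Rbar_bounded (fun v => exists x x' : M, v = Rabs (dist x x' - dist (f x) (f x')))
    _ k (ex_intro _ m (ex_intro _ m eq_refl))) as [v [Hv Hvk]].
  { now intros v (x & x' & ->). }
  pose proof (Hrigid f v Hinj Hsurj (ex_intro _ m Hm) Hv). lra.
Qed.

Lemma fibre_transfer (X : MetricSpace) (c1 c2 : X -> M) K : 2 * K < s0 ->
  map_distortion_le c1 K -> map_distortion_le c2 K ->
  forall x y, c1 x = c1 y -> c2 x = c2 y.
Proof.
  intros HK H1 H2 x y Hxy. apply NNPP. intros Hne.
  specialize (H1 x y). specialize (H2 x y). specialize (Hsep _ _ Hne).
  rewrite Hxy, dist_refl in H1. apply Rabs_le_between in H1. apply Rabs_le_between in H2.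
  lra.
Qed.

(* Composing one surjection with a section of the other yields a bijection of [M] of
   distortion at most [2 K], which must be the identity. *)
Lemma surjections_agree (X : MetricSpace) (c c' : X -> M) K : 2 * K < s0 -> 2 * K < e0 ->
  Surjective c -> Surjective c' -> map_distortion_le c K -> map_distortion_le c' K ->
  forall x, c x = c' x.
Proof.
  intros Hs He Hc Hc' Hdc Hdc'.
  destruct (choice (fun m x => c x = m) Hc) as [g Hg].
  set (f := fun m => c' (g m)).
  assert (Hfc : forall x, f (c x) = c' x).
  { intros x. apply (fibre_transfer X c c' K); auto. }
  assert (Hid : forall m, f m = m).
  { apply (bijection_eq_id f (2 * K)); [| |intros m m'|lra].
    - intros m m' Heq. rewrite <- (Hg m), <- (Hg m'). now apply (fibre_transfer X c' c K).
    - intros m. destruct (Hc' m) as [x <-]. exists (c x). apply Hfc.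
    - rewrite <- (Hg m) at 1. rewrite <- (Hg m') at 1.
      specialize (Hdc (g m) (g m')). specialize (Hdc' (g m) (g m')).
      apply Rabs_le_between in Hdc. apply Rabs_le_between in Hdc'.
      apply Rabs_le_between. unfold f. lra. }
  intros x. now rewrite <- Hfc, Hid.
Qed.

Lemma approx_surjection (X : MetricSpace) r eps : dGH M X = Finite r -> 0 < eps ->
  2 * r + 4 * eps <= s0 ->
  exists c : X -> M, Surjective c /\ map_distortion_le c (2 * r + 4 * eps).
Proof.
  intros HX Heps Hs.
  destruct (Glb_Rbar_approx _ _ HX eps Heps) as [rho [Hrho Hlt]].
  destruct (correspondence_of_GH_bound _ _ _ eps Hrho Heps) as (Rl & [HM HXM] & Hdis).
  destruct (choice (fun x m => Rl m x) HXM) as [c Hc].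
  exists c. split.
  - intros m. destruct (HM m) as [x Hx]. exists x. apply NNPP. intros Hne.
    specialize (Hdis m (c x) x x Hx (Hc x)). specialize (Hsep _ _ (not_eq_sym Hne)).
    rewrite dist_refl, Rminus_0_r, Rabs_pos_eq in Hdis by apply dist_ge0. lra.
  - intros x y. specialize (Hdis (c x) (c y) x y (Hc x) (Hc y)).
    rewrite Rabs_minus_sym. lra.
Qed.

(* All surjections produced by [approx_surjection] for small [eps] coincide, so a single
   one has distortion at most [2 r + 4 eps] for every [eps]. *)
Lemma optimal_surjection (X : MetricSpace) r : 0 < r -> 4 * r < s0 -> 4 * r < e0 ->
  dGH M X = Finite r -> exists c : X -> M, Surjective c /\ map_distortion_le c (2 * r).
Proof.
  intros Hr Hs He HX.
  set (k := Rmin ((s0 - 4 * r) / 16) ((e0 - 4 * r) / 16)).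
  assert (Hk : 0 < k) by (apply Rmin_pos; lra).
  assert (Hks : k <= (s0 - 4 * r) / 16) by apply Rmin_l.
  assert (Hke : k <= (e0 - 4 * r) / 16) by apply Rmin_r.
  destruct (approx_surjection X r k HX Hk ltac:(lra)) as [c [Hc Hdc]].
  exists c. split; [exact Hc|]. intros x y. apply Rnot_lt_le. intros Hgt.
  set (a := Rabs (dist x y - dist (c x) (c y))) in *.
  set (eps := Rmin k ((a - 2 * r) / 8)).
  assert (Heps : 0 < eps) by (apply Rmin_pos; lra).
  assert (Hek : eps <= k) by apply Rmin_l.
  assert (Hea : eps <= (a - 2 * r) / 8) by apply Rmin_r.
  destruct (approx_surjection X r eps HX Heps ltac:(lra)) as [c' [Hc' Hdc']].
  assert (Hcc' : forall z, c z = c' z).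
  { apply (surjections_agree X c c' (2 * r + 4 * k)); auto; try lra.
    apply (map_distortion_le_weaken _ _ _ (2 * r + 4 * eps)); auto; lra. }
  specialize (Hdc' x y). rewrite <- !Hcc' in Hdc'. fold a in Hdc'. lra.
Qed.
End OptimalSurjection.

(** * Deforming a space of the sphere *)

(* Parameters outside the admissible ranges [0 <= t < 1] and [0 < l] are replaced by
   admissible junk values, so that the spaces below are defined for all reals. *)
Definition clamp01 (t : R) : R := if Rle_dec 0 t then if Rlt_dec t 1 then t else 0 else 0.
Definition clamp_pos (l : R) : R := if Rlt_dec 0 l then l else 1.

Lemma clamp01_range t : 0 <= clamp01 t < 1.
Proof. unfold clamp01. destruct Rle_dec; [destruct Rlt_dec|]; lra. Qed.

Lemma clamp01_range_le t : 0 <= clamp01 t <= 1.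
Proof. pose proof (clamp01_range t). lra. Qed.

Lemma clamp01_id t : 0 <= t < 1 -> clamp01 t = t.
Proof. intros Ht. unfold clamp01. destruct Rle_dec; [destruct Rlt_dec|]; lra. Qed.

Lemma clamp_pos_gt0 l : 0 < clamp_pos l.
Proof. unfold clamp_pos. destruct Rlt_dec; lra. Qed.

Lemma clamp_pos_id l : 0 < l -> clamp_pos l = l.
Proof. intros Hl. unfold clamp_pos. destruct Rlt_dec; lra. Qed.

Section Interpolation.
Variables (X M : MetricSpace) (c : X -> M).

Definition interp_dist (t : R) (x y : X) : R := (1 - t) * dist x y + t * dist (c x) (c y).

Lemma interp_dist_refl t x : interp_dist t x x = 0.
Proof. unfold interp_dist. rewrite !dist_refl. ring. Qed.

Lemma interp_dist_eq0 t : 0 <= t < 1 -> forall x y, interp_dist t x y = 0 <-> x = y.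
Proof.
  intros Ht x y. split; [|intros ->; apply interp_dist_refl].
  unfold interp_dist. intros H.
  pose proof (dist_ge0 _ x y). pose proof (dist_ge0 _ (c x) (c y)).
  apply dist_eq0. nra.
Qed.

Lemma interp_dist_sym t x y : interp_dist t x y = interp_dist t y x.
Proof. unfold interp_dist. now rewrite (dist_sym _ x y), (dist_sym _ (c x)). Qed.

Lemma interp_dist_tri t : 0 <= t <= 1 ->
  forall x y z, interp_dist t x z <= interp_dist t x y + interp_dist t y z.
Proof.
  intros Ht x y z. unfold interp_dist.
  pose proof (dist_tri _ x y z). pose proof (dist_tri _ (c x) (c y) (c z)). nra.
Qed.

Lemma interp_dist_distortion t k x y : 0 <= t <= 1 ->
  Rabs (dist x y - dist (c x) (c y)) <= k ->
  Rabs (dist (c x) (c y) - interp_dist t x y) <= (1 - t) * k.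
Proof.
  intros Ht Hk. apply Rabs_le_between in Hk. apply Rabs_le_between.
  unfold interp_dist. nra.
Qed.

Lemma interp_dist_0 x y : interp_dist 0 x y = dist x y.
Proof. unfold interp_dist. ring. Qed.

Lemma interp_dist_lipschitz t t' k x y : Rabs (dist x y - dist (c x) (c y)) <= k ->
  Rabs (interp_dist t x y - interp_dist t' x y) <= k * Rabs (t - t').
Proof.
  intros Hk. replace (interp_dist t x y - interp_dist t' x y)
    with ((t' - t) * (dist x y - dist (c x) (c y))) by (unfold interp_dist; ring).
  rewrite Rabs_mult, Rabs_minus_sym. pose proof (Rabs_pos (t - t')). nra.
Qed.

Definition interp_space (t : R) : MetricSpace :=
  Build_MetricSpace X (interp_dist (clamp01 t)) (interp_dist_eq0 _ (clamp01_range t))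
    (interp_dist_sym _) (interp_dist_tri _ (clamp01_range_le t)).

Lemma interp_space_compact t delta : 0 < delta ->
  (forall x y, dist x y < delta -> c x = c y) ->
  compact_space X -> compact_space (interp_space t).
Proof.
  intros Hdelta Hloc HX u. destruct (HX u) as (phi & x & Hphi & Hlim).
  exists phi, x. split; [exact Hphi|]. intros eps Heps.
  destruct (Hlim (Rmin eps delta)) as [N HN]; [now apply Rmin_pos|].
  exists N. intros n Hn. specialize (HN n Hn).
  pose proof (Rmin_l eps delta). pose proof (Rmin_r eps delta).
  pose proof (clamp01_range t). pose proof (dist_ge0 _ (u (phi n)) x).
  simpl. unfold interp_dist. rewrite (Hloc (u (phi n)) x), dist_refl by lra. nra.
Qed.
End Interpolation.

Section PointExtension.
Variables (Y : MetricSpace) (y0 : Y) (l : R).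
Hypothesis Hl : 0 < l.

Definition ext_dist (a b : option Y) : R :=
  match a, b with
  | Some x, Some y => dist x y
  | Some x, None | None, Some x => Rmax l (dist y0 x)
  | None, None => 0
  end.

Lemma ext_dist_eq0 a b : ext_dist a b = 0 <-> a = b.
Proof.
  destruct a as [x|], b as [y|]; simpl.
  - rewrite dist_eq0. split; [now intros ->|now intros [= ->]].
  - pose proof (Rmax_l l (dist y0 x)). split; [lra|discriminate].
  - pose proof (Rmax_l l (dist y0 y)). split; [lra|discriminate].
  - easy.
Qed.

Lemma ext_dist_sym a b : ext_dist a b = ext_dist b a.
Proof. destruct a, b; simpl; auto using dist_sym. Qed.

Lemma ext_dist_tri a b d : ext_dist a d <= ext_dist a b + ext_dist b d.
Proof.
  assert (Hmax : forall x, 0 < Rmax l (dist y0 x)).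
  { intros x. pose proof (Rmax_l l (dist y0 x)). lra. }
  destruct a as [x|], b as [y|], d as [z|]; simpl;
    try (pose proof (Hmax x)); try (pose proof (Hmax y)); try (pose proof (Hmax z));
    try lra; try apply dist_tri.
  - pose proof (dist_tri _ y0 y x). rewrite (dist_sym _ y x) in *.
    unfold Rmax. repeat destruct Rle_dec; pose proof (dist_ge0 _ x y); lra.
  - pose proof (dist_tri _ x y0 z). rewrite (dist_sym _ x y0) in *.
    unfold Rmax. repeat destruct Rle_dec; lra.
  - pose proof (dist_tri _ y0 y z).
    unfold Rmax. repeat destruct Rle_dec; pose proof (dist_ge0 _ y z); lra.
Qed.
End PointExtension.

Definition point_extension (Y : MetricSpace) (y0 : Y) (l : R) : MetricSpace :=
  Build_MetricSpace (option Y) (ext_dist Y y0 (clamp_pos l))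
    (ext_dist_eq0 Y y0 _ (clamp_pos_gt0 l)) (ext_dist_sym Y y0 _)
    (ext_dist_tri Y y0 _ (clamp_pos_gt0 l)).

Definition frequently (P : nat -> Prop) : Prop := forall N, exists n, (N <= n)%nat /\ P n.

Lemma subsequence_of_frequently (P : nat -> Prop) : frequently P ->
  exists phi : nat -> nat, (forall n, (phi n < phi (S n))%nat) /\ forall n, P (phi n).
Proof.
  intros H. destruct (choice _ H) as [f Hf].
  exists (nat_rec (fun _ => nat) (f 0%nat) (fun _ p => f (S p))). split.
  - intros n. simpl. specialize (Hf (S (nat_rec (fun _ => nat) (f 0%nat) (fun _ p => f (S p)) n))).
    lia.
  - intros [|n]; apply Hf.
Qed.

Lemma point_extension_compact (Y : MetricSpace) (y0 : Y) l :
  compact_space Y -> compact_space (point_extension Y y0 l).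
Proof.
  intros HY u.
  destruct (classic (frequently (fun n => u n = None))) as [Hfreq|Hfreq].
  - destruct (subsequence_of_frequently _ Hfreq) as [phi [Hphi Hnone]].
    exists phi, None. split; [exact Hphi|].
    intros eps Heps. exists 0%nat. intros n _. rewrite Hnone. simpl. lra.
  - apply not_all_ex_not in Hfreq. destruct Hfreq as [N HN].
    assert (Hsome : forall n, (N <= n)%nat -> exists y, u n = Some y).
    { intros n Hn. destruct (u n) as [y|] eqn:Hu; [now exists y|].
      exfalso. apply HN. now exists n. }
    set (v k := match u (N + k)%nat with Some y => y | None => y0 end).
    destruct (HY v) as (phi & y & Hphi & Hlim).
    exists (fun k => (N + phi k)%nat), (Some y). split.
    + intros n. specialize (Hphi n). lia.
    + intros eps Heps. destruct (Hlim eps Heps) as [N' HN'].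
      exists N'. intros n Hn. specialize (HN' n Hn).
      destruct (Hsome (N + phi n)%nat ltac:(lia)) as [z Hz].
      unfold v in HN'. rewrite Hz in *. exact HN'.
Qed.

Lemma Rmax_lipschitz a b a' b' : Rabs (Rmax a b - Rmax a' b') <= Rabs (a - a') + Rabs (b - b').
Proof.
  pose proof (Rle_abs (a - a')). pose proof (Rle_abs (b - b')).
  pose proof (Rabs_minus_sym a a'). pose proof (Rle_abs (a' - a)).
  pose proof (Rabs_minus_sym b b'). pose proof (Rle_abs (b' - b)).
  unfold Rmax. destruct (Rle_dec a b), (Rle_dec a' b'); apply Rabs_le_between; lra.
Qed.

Definition deformation (X M : MetricSpace) (c : X -> M) (x0 : X) (l t : R) : MetricSpace :=
  point_extension (interp_space X M c t) x0 l.

Section DeformationDist.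
Variables (X M : MetricSpace) (c : X -> M) (x0 : X) (l t : R).
Hypotheses (Hl : 0 < l) (Ht : 0 <= t < 1).

Lemma deformation_dist_some x y :
  @dist (deformation X M c x0 l t) (Some x) (Some y) = interp_dist X M c t x y.
Proof. simpl. now rewrite clamp01_id. Qed.

Lemma deformation_dist_none x :
  @dist (deformation X M c x0 l t) (Some x) None = Rmax l (interp_dist X M c t x0 x).
Proof. simpl. now rewrite clamp01_id, clamp_pos_id. Qed.

Lemma deformation_dist_none_l x :
  @dist (deformation X M c x0 l t) None (Some x) = Rmax l (interp_dist X M c t x0 x).
Proof. rewrite dist_sym. apply deformation_dist_none. Qed.
End DeformationDist.

Lemma deformation_dGH_ge_gap (M X : MetricSpace) r (c : X -> M) (x0 : X) t : 0 < r ->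
  (forall m m' : M, m <> m' -> 4 * r < dist m m') ->
  Rbar_le (Finite r) (dGH M (deformation X M c x0 (2 * r) t)).
Proof.
  intros Hr Hsep. apply (dGH_ge_of_gap M (deformation X M c x0 (2 * r) t) r (Some x0) None Hsep).
  simpl. rewrite interp_dist_refl, clamp_pos_id, Rmax_left; lra.
Qed.

Section DeformationOnSphere.
Variables (M X : MetricSpace) (r : R) (c : X -> M) (x0 : X).
Hypothesis Hr : 0 < r.
Hypothesis Hsep : forall m m' : M, m <> m' -> 4 * r < dist m m'.
Hypothesis Hdis : map_distortion_le c (2 * r).
Hypothesis Hsurj : Surjective c.

Lemma distortion_locally_constant x y : dist x y < 2 * r -> c x = c y.
Proof.
  intros Hxy. apply NNPP. intros Hne. specialize (Hsep _ _ Hne).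
  specialize (Hdis x y). apply Rabs_le_between in Hdis. lra.
Qed.

Lemma deformation_compact l t : compact_space X -> compact_space (deformation X M c x0 l t).
Proof.
  intros HX. apply point_extension_compact.
  apply (interp_space_compact X M c t (2 * r)); [lra|exact distortion_locally_constant|exact HX].
Qed.

Lemma extension_distortion l t x : 0 < l <= 2 * r -> 0 <= t < 1 ->
  Rabs (dist (c x0) (c x) - Rmax l (interp_dist X M c t x0 x)) <= 2 * r.
Proof.
  intros Hl Ht. pose proof (interp_dist_distortion X M c t (2 * r) x0 x ltac:(lra) (Hdis x0 x))
    as Hint.
  unfold Rmax. destruct (Rle_dec l (interp_dist X M c t x0 x)) as [Hle|Hgt].
  - pose proof (Rabs_pos (dist (c x0) (c x) - interp_dist X M c t x0 x)). nra.
  - destruct (classic (c x0 = c x)) as [Heq|Hne].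
    + rewrite Heq, dist_refl. apply Rabs_le_between. lra.
    + exfalso. specialize (Hsep _ _ Hne). apply Rabs_le_between in Hint. nra.
Qed.

Lemma deformation_dGH_le l t : 0 < l <= 2 * r -> 0 <= t < 1 ->
  Rbar_le (dGH M (deformation X M c x0 l t)) (Finite r).
Proof.
  intros Hl Ht.
  apply (dGH_le_correspondence M (deformation X M c x0 l t)
    (fun m w => c (match w with Some x => x | None => x0 end) = m)); [exact Hr|split|].
  - intros m. destruct (Hsurj m) as [x <-]. now exists (Some x).
  - intros w. eauto.
  - intros m m' w w' <- <-.
    destruct w as [x|], w' as [x'|].
    + rewrite deformation_dist_some by lra.
      pose proof (interp_dist_distortion X M c t (2 * r) x x' ltac:(lra) (Hdis x x')).
      pose proof (Rabs_pos (dist (c x) (c x') - interp_dist X M c t x x')). nra.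
    + rewrite deformation_dist_none, dist_sym by lra. now apply extension_distortion.
    + rewrite deformation_dist_none_l by lra. now apply extension_distortion.
    + rewrite !dist_refl, Rminus_0_r, Rabs_R0. lra.
Qed.

(* Deleting the added point recovers [X], so a correspondence with the deformation that is
   too good restricts to one with [X]. *)
Lemma deformation_dGH_ge_start l : dGH M X = Finite r -> 0 < l <= 2 * r ->
  Rbar_le (Finite r) (dGH M (deformation X M c x0 l 0)).
Proof.
  intros HX Hl. apply Glb_Rbar_ge. intros rho Hrho. apply Rnot_lt_le. intros Hlt.
  assert (Hrho0 : 0 <= rho) by exact (GH_bound_ge0 _ _ _ (inhabits (c x0)) Hrho).
  destruct (correspondence_of_GH_bound _ _ _ ((r - rho) / 2) Hrho) as (Rl & [HM HW] & Hd);
    [lra|].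
  assert (HX' : Rbar_le (dGH M X) (Finite (rho + (r - rho) / 2))).
  { apply (dGH_le_correspondence M X (fun m x => Rl m (Some x))); [lra|split|].
    - intros m. destruct (HM m) as [[x|] Hw]; [now exists x|].
      destruct (HW (Some x0)) as [m' Hm']. specialize (Hd m m' None (Some x0) Hw Hm').
      rewrite deformation_dist_none_l, interp_dist_refl, Rmax_left in Hd by lra.
      destruct (classic (m = m')) as [<-|Hne]; [now exists x0|].
      specialize (Hsep _ _ Hne). apply Rabs_le_between in Hd. lra.
    - intros x. apply HW.
    - intros m m' x x' Hx Hx'. specialize (Hd _ _ _ _ Hx Hx').
      rewrite deformation_dist_some, interp_dist_0 in Hd by lra. lra. }
  rewrite HX in HX'. simpl in HX'. lra.
Qed.
End DeformationOnSphere.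

Lemma deformation_dGH_le_params (X M : MetricSpace) (c : X -> M) (x0 : X) k l l' t t' rho :
  map_distortion_le c k -> 0 < l -> 0 < l' -> 0 <= t < 1 -> 0 <= t' < 1 -> 0 < rho ->
  Rabs (l - l') + k * Rabs (t - t') <= 2 * rho ->
  Rbar_le (dGH (deformation X M c x0 l t) (deformation X M c x0 l' t')) (Finite rho).
Proof.
  intros Hdis Hl Hl' Ht Ht' Hrho Hb.
  apply (dGH_le_correspondence (deformation X M c x0 l t) (deformation X M c x0 l' t')
    (option_lift (fun x y : X => x = y))); [exact Hrho| |].
  { apply correspondence_option_lift. split; eauto. }
  intros wa wa' wb wb' H1 H2. pose proof (Rabs_pos (l - l')).
  destruct wa as [x|], wb as [y|]; try contradiction;
    destruct wa' as [x'|], wb' as [y'|]; try contradiction; simpl in H1, H2; subst.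
  - rewrite !deformation_dist_some by lra.
    pose proof (interp_dist_lipschitz X M c t t' k y y' (Hdis y y')). lra.
  - rewrite !deformation_dist_none by lra.
    pose proof (Rmax_lipschitz l (interp_dist X M c t x0 y) l' (interp_dist X M c t' x0 y)).
    pose proof (interp_dist_lipschitz X M c t t' k x0 y (Hdis x0 y)). lra.
  - rewrite !deformation_dist_none_l by lra.
    pose proof (Rmax_lipschitz l (interp_dist X M c t x0 y') l' (interp_dist X M c t' x0 y')).
    pose proof (interp_dist_lipschitz X M c t t' k x0 y' (Hdis x0 y')). lra.
  - rewrite !dist_refl, Rminus_0_r, Rabs_R0. lra.
Qed.

Lemma deformation_dGH_le_base (X M : MetricSpace) (c : X -> M) (x0 : X) l rho :
  0 < l -> 0 < rho -> l <= 2 * rho ->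
  Rbar_le (dGH X (deformation X M c x0 l 0)) (Finite rho).
Proof.
  intros Hl Hrho Hb.
  assert (Hext : forall x, Rabs (dist x0 x - Rmax l (interp_dist X M c 0 x0 x)) <= 2 * rho).
  { intros x. rewrite interp_dist_0. pose proof (dist_ge0 _ x0 x).
    unfold Rmax. destruct Rle_dec; apply Rabs_le_between; lra. }
  apply (dGH_le_correspondence X (deformation X M c x0 l 0)
    (fun x w => w = Some x \/ (w = None /\ x = x0))); [exact Hrho|split|].
  - intros x. exists (Some x). now left.
  - intros [x|]; [exists x; now left|exists x0; now right].
  - intros x x' w w' [->|[-> ->]] [->|[-> ->]].
    + rewrite deformation_dist_some, interp_dist_0, Rminus_diag, Rabs_R0 by lra. lra.
    + rewrite deformation_dist_none, dist_sym by lra. apply Hext.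
    + rewrite deformation_dist_none_l by lra. apply Hext.
    + rewrite !dist_refl, Rminus_0_r, Rabs_R0. lra.
Qed.

Section FibredDeformations.
Variables (M A B : MetricSpace) (cA : A -> M) (cB : B -> M) (kA kB : R).
Hypotheses (HdA : map_distortion_le cA kA) (HdB : map_distortion_le cB kB).

Lemma interp_dist_fibred t t' a a' b b' : 0 <= t < 1 -> 0 <= t' < 1 ->
  cA a = cB b -> cA a' = cB b' ->
  Rabs (interp_dist A M cA t a a' - interp_dist B M cB t' b b') <= (1 - t) * kA + (1 - t') * kB.
Proof.
  intros Ht Ht' Hb Hb'.
  pose proof (interp_dist_distortion A M cA t kA a a' ltac:(lra) (HdA a a')) as Ha.
  pose proof (interp_dist_distortion B M cB t' kB b b' ltac:(lra) (HdB b b')) as Hb2.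
  rewrite Hb, Hb' in Ha. apply Rabs_le_between in Ha. apply Rabs_le_between in Hb2.
  apply Rabs_le_between. lra.
Qed.

Lemma deformation_dGH_le_fibred (a0 : A) (b0 : B) l t t' rho :
  cA a0 = cB b0 -> Surjective cA -> Surjective cB ->
  0 < l -> 0 <= t < 1 -> 0 <= t' < 1 -> 0 < rho -> (1 - t) * kA + (1 - t') * kB <= 2 * rho ->
  Rbar_le (dGH (deformation A M cA a0 l t) (deformation B M cB b0 l t')) (Finite rho).
Proof.
  intros H0 HsA HsB Hl Ht Ht' Hrho Hb.
  apply (dGH_le_correspondence (deformation A M cA a0 l t) (deformation B M cB b0 l t')
    (option_lift (fun a b => cA a = cB b))); [exact Hrho| |].
  { apply correspondence_option_lift. split.
    - intros a. destruct (HsB (cA a)) as [b Hb']. now exists b.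
    - intros b. destruct (HsA (cB b)) as [a Ha']. now exists a. }
  intros wa wa' wb wb' H1 H2.
  destruct wa as [a|], wb as [b|]; try contradiction;
    destruct wa' as [a'|], wb' as [b'|]; try contradiction; simpl in H1, H2.
  - rewrite !deformation_dist_some by lra.
    pose proof (interp_dist_fibred t t' a a' b b' Ht Ht' H1 H2). lra.
  - rewrite !deformation_dist_none by lra.
    pose proof (Rmax_lipschitz l (interp_dist A M cA t a0 a) l (interp_dist B M cB t' b0 b)).
    pose proof (interp_dist_fibred t t' a0 a b0 b Ht Ht' H0 H1).
    rewrite Rminus_diag, Rabs_R0 in *. lra.
  - rewrite !deformation_dist_none_l by lra.
    pose proof (Rmax_lipschitz l (interp_dist A M cA t a0 a') l (interp_dist B M cB t' b0 b')).
    pose proof (interp_dist_fibred t t' a0 a' b0 b' Ht Ht' H0 H2).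
    rewrite Rminus_diag, Rabs_R0 in *. lra.
  - rewrite !dist_refl, Rminus_0_r, Rabs_R0. lra.
Qed.
End FibredDeformations.

(** * Paths in the sphere *)

Definition path_radius (r u : R) : R := Rmin (4 * r * u) (2 * r).
Definition path_time (u : R) : R := Rmax 0 (2 * u - 1).

Section Schedule.
Variable r : R.
Hypothesis Hr : 0 < r.

Lemma path_radius_range u : 0 < u -> 0 < path_radius r u <= 2 * r.
Proof. intros Hu. unfold path_radius, Rmin. destruct Rle_dec; nra. Qed.

Lemma path_radius_le u : path_radius r u <= 4 * r * u.
Proof. apply Rmin_l. Qed.

Lemma path_radius_late u : 1 / 2 <= u -> path_radius r u = 2 * r.
Proof. intros Hu. unfold path_radius, Rmin. destruct Rle_dec; nra. Qed.

Lemma path_radius_lipschitz u v :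
  Rabs (path_radius r u - path_radius r v) <= 4 * r * Rabs (u - v).
Proof.
  pose proof (Rle_abs (u - v)). pose proof (Rle_abs (v - u)) as Hvu.
  rewrite Rabs_minus_sym in Hvu.
  unfold path_radius, Rmin.
  destruct (Rle_dec (4 * r * u) (2 * r)), (Rle_dec (4 * r * v) (2 * r));
    apply Rabs_le_between; nra.
Qed.

Lemma path_time_range u : u < 1 -> 0 <= path_time u < 1.
Proof. intros Hu. unfold path_time, Rmax. destruct Rle_dec; lra. Qed.

Lemma path_time_early u : u <= 1 / 2 -> path_time u = 0.
Proof. intros Hu. unfold path_time, Rmax. destruct Rle_dec; lra. Qed.

Lemma path_time_late u : 1 / 2 <= u -> path_time u = 2 * u - 1.
Proof. intros Hu. unfold path_time, Rmax. destruct Rle_dec; lra. Qed.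

Lemma path_time_lipschitz u v : Rabs (path_time u - path_time v) <= 2 * Rabs (u - v).
Proof.
  pose proof (Rle_abs (u - v)). pose proof (Rle_abs (v - u)) as Hvu.
  rewrite Rabs_minus_sym in Hvu.
  unfold path_time, Rmax. destruct (Rle_dec 0 (2 * u - 1)), (Rle_dec 0 (2 * v - 1));
    apply Rabs_le_between; lra.
Qed.
End Schedule.

Lemma id_distortion (M : MetricSpace) : map_distortion_le (fun m : M => m) 0.
Proof. intros x y. rewrite Rminus_diag, Rabs_R0. lra. Qed.

Section SpherePath.
Variables (M : MetricSpace) (r : R) (p : M).
Hypothesis Hr : 0 < r.
Hypothesis Hsep : forall m m' : M, m <> m' -> 4 * r < dist m m'.
Hypothesis HM : compact_space M.

Definition terminal_space : MetricSpace := deformation M M (fun m => m) p (2 * r) 0.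

(* The interpolated metric degenerates at [u = 1]; its metric quotient is [terminal_space]. *)
Definition sphere_path (A : MetricSpace) (cA : A -> M) (a0 : A) (u : R) : MetricSpace :=
  if Rle_dec u 0 then A
  else if Rlt_dec u 1 then deformation A M cA a0 (path_radius r u) (path_time u)
  else terminal_space.

Definition pointed_optimal_map (A : MetricSpace) (cA : A -> M) (a0 : A) : Prop :=
  Surjective cA /\ map_distortion_le cA (2 * r) /\ cA a0 = p.

Lemma terminal_on_sphere : gh_sphere M r terminal_space.
Proof.
  assert (Hid : map_distortion_le (fun m : M => m) (2 * r))
    by (apply (map_distortion_le_weaken _ _ _ 0); [lra|apply id_distortion]).
  split; [split|].
  - exact (inhabits None).
  - apply (deformation_compact M M r _ p Hr Hsep Hid _ _ HM).
  - apply Rbar_le_antisym.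
    + apply (deformation_dGH_le M M r _ p Hr Hsep Hid); [intros m; now exists m|lra|lra].
    + apply deformation_dGH_ge_gap; assumption.
Qed.

Lemma sphere_path_late (A : MetricSpace) (cA : A -> M) (a0 : A) u :
  pointed_optimal_map A cA a0 -> 1 / 2 < u <= 1 ->
  exists (A' : MetricSpace) (c' : A' -> M) (a' : A') k t,
    sphere_path A cA a0 u = deformation A' M c' a' (2 * r) t /\
    Surjective c' /\ map_distortion_le c' k /\ c' a' = p /\
    0 <= t < 1 /\ (1 - t) * k <= 4 * r * (1 - u).
Proof.
  intros (HsA & HdA & Ha0) Hu. unfold sphere_path.
  destruct (Rle_dec u 0); [lra|]. destruct (Rlt_dec u 1).
  - exists A, cA, a0, (2 * r), (path_time u).
    rewrite path_radius_late, path_time_late by lra.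
    repeat split; auto; lra.
  - exists M, (fun m => m), p, 0, 0. repeat split; auto using id_distortion; try lra.
    + intros m. now exists m.
    + nra.
Qed.

Lemma sphere_paths_dGH_le (A : MetricSpace) (cA : A -> M) (a0 : A)
    (B : MetricSpace) (cB : B -> M) (b0 : B) u v rho :
  pointed_optimal_map A cA a0 -> pointed_optimal_map B cB b0 ->
  1 / 2 < u <= 1 -> 1 / 2 < v <= 1 -> 0 < rho ->
  4 * r * (1 - u) + 4 * r * (1 - v) <= 2 * rho ->
  Rbar_le (dGH (sphere_path A cA a0 u) (sphere_path B cB b0 v)) (Finite rho).
Proof.
  intros HA HB Hu Hv Hrho Hb.
  destruct (sphere_path_late A cA a0 u HA Hu) as (A' & c & a & k & t & -> & Hc & Hk & Ha & Ht & Htk).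
  destruct (sphere_path_late B cB b0 v HB Hv) as (B' & c' & b & k' & t' & -> & Hc' & Hk' & Hb' & Ht' & Htk').
  apply (deformation_dGH_le_fibred M A' B' c c' k k'); auto; [congruence|lra|lra].
Qed.

Section OnePath.
Variables (A : MetricSpace) (cA : A -> M) (a0 : A).
Hypothesis HAc : compact_space A.
Hypothesis HAr : dGH M A = Finite r.
Hypothesis HcA : pointed_optimal_map A cA a0.

Lemma sphere_path_start u : u <= 0 -> sphere_path A cA a0 u = A.
Proof. intros Hu. unfold sphere_path. now destruct Rle_dec. Qed.

Lemma sphere_path_on_sphere u : 0 <= u <= 1 -> gh_sphere M r (sphere_path A cA a0 u).
Proof.
  destruct HcA as (HsA & HdA & Ha0). intros Hu. unfold sphere_path.
  destruct (Rle_dec u 0); [split; [split; [exact (inhabits a0)|exact HAc]|exact HAr]|].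
  destruct (Rlt_dec u 1) as [Hu1|]; [|exact terminal_on_sphere].
  pose proof (path_radius_range r Hr u ltac:(lra)). pose proof (path_time_range u Hu1).
  split; [split|].
  - exact (inhabits None).
  - now apply (deformation_compact M A r cA a0 Hr Hsep HdA).
  - apply Rbar_le_antisym; [now apply (deformation_dGH_le M A r cA a0 Hr Hsep HdA HsA)|].
    destruct (Rle_dec u (1 / 2)).
    + rewrite path_time_early by lra. now apply (deformation_dGH_ge_start M A r cA a0).
    + rewrite path_radius_late by lra. now apply deformation_dGH_ge_gap.
Qed.

Lemma sphere_path_dGH_le u v rho : 0 <= u <= 1 -> 0 <= v <= 1 -> Rabs (u - v) < 1 / 2 ->
  0 < rho -> 8 * r * Rabs (u - v) <= 2 * rho ->
  Rbar_le (dGH (sphere_path A cA a0 u) (sphere_path A cA a0 v)) (Finite rho).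
Proof.
  intros Hu Hv Huv Hrho Hb.
  pose proof (Rle_abs (u - v)). pose proof (Rle_abs (v - u)) as Hvu.
  rewrite Rabs_minus_sym in Hvu.
  destruct (Rlt_dec u 1) as [Hu1|Hu1]; [destruct (Rlt_dec v 1) as [Hv1|Hv1]|].
  2, 3: apply sphere_paths_dGH_le; auto; nra.
  destruct HcA as (_ & HdA & _). unfold sphere_path.
  destruct (Rle_dec u 0), (Rle_dec v 0); destruct (Rlt_dec u 1), (Rlt_dec v 1); try lra.
  - rewrite dGH_refl by exact (inhabits a0). simpl. lra.
  - rewrite path_time_early by lra. apply deformation_dGH_le_base; [apply path_radius_range| |]; try lra.
    pose proof (path_radius_le r v). nra.
  - rewrite dGH_sym, path_time_early by lra.
    apply deformation_dGH_le_base; [apply path_radius_range| |]; try lra.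
    pose proof (path_radius_le r u). nra.
  - apply (deformation_dGH_le_params A M cA a0 (2 * r)); auto;
      try apply path_radius_range; try apply path_time_range; try lra.
    pose proof (path_radius_lipschitz r Hr u v). pose proof (path_time_lipschitz u v).
    pose proof (Rabs_pos (u - v)). nra.
Qed.
End OnePath.
End SpherePath.

Section JoinedPath.
Variables (M : MetricSpace) (r : R) (p : M).
Hypothesis Hr : 0 < r.
Hypothesis Hsep : forall m m' : M, m <> m' -> 4 * r < dist m m'.
Hypothesis HM : compact_space M.
Variables (X : MetricSpace) (cX : X -> M) (x0 : X) (Y : MetricSpace) (cY : Y -> M) (y0 : Y).
Hypotheses (HXc : compact_space X) (HXr : dGH M X = Finite r).
Hypotheses (HYc : compact_space Y) (HYr : dGH M Y = Finite r).
Hypotheses (HcX : pointed_optimal_map M r p X cX x0) (HcY : pointed_optimal_map M r p Y cY y0).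

Definition joined_path (t : R) : MetricSpace :=
  if Rle_dec t (1 / 2) then sphere_path M r p X cX x0 (2 * t)
  else sphere_path M r p Y cY y0 (2 - 2 * t).

Lemma joined_path_0 : joined_path 0 = X.
Proof. unfold joined_path. destruct Rle_dec; [|lra]. apply sphere_path_start. lra. Qed.

Lemma joined_path_1 : joined_path 1 = Y.
Proof. unfold joined_path. destruct Rle_dec; [lra|]. apply sphere_path_start. lra. Qed.

Lemma joined_path_on_sphere t : 0 <= t <= 1 -> gh_sphere M r (joined_path t).
Proof.
  intros Ht. unfold joined_path. destruct Rle_dec.
  - apply sphere_path_on_sphere; auto; lra.
  - apply sphere_path_on_sphere; auto; lra.
Qed.

Lemma joined_path_dGH_le s t rho : 0 <= s <= 1 -> 0 <= t <= 1 -> Rabs (s - t) < 1 / 8 ->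
  0 < rho -> 16 * r * Rabs (s - t) <= 2 * rho ->
  Rbar_le (dGH (joined_path s) (joined_path t)) (Finite rho).
Proof.
  intros Hs Ht Hst Hrho Hb.
  pose proof (Rle_abs (s - t)). pose proof (Rle_abs (t - s)) as Hts.
  rewrite Rabs_minus_sym in Hts.
  assert (HX2 : Rabs (2 * s - 2 * t) = 2 * Rabs (s - t)).
  { replace (2 * s - 2 * t) with (2 * (s - t)) by ring.
    rewrite Rabs_mult, Rabs_pos_eq; lra. }
  assert (HY2 : Rabs (2 - 2 * s - (2 - 2 * t)) = 2 * Rabs (s - t)).
  { replace (2 - 2 * s - (2 - 2 * t)) with (2 * (t - s)) by ring.
    rewrite Rabs_mult, Rabs_pos_eq, (Rabs_minus_sym t); lra. }
  unfold joined_path. destruct (Rle_dec s (1 / 2)), (Rle_dec t (1 / 2)).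
  - apply (sphere_path_dGH_le M r p Hr X cX x0 HcX); rewrite ?HX2; lra.
  - apply (sphere_paths_dGH_le M r p Hr); auto; nra.
  - apply (sphere_paths_dGH_le M r p Hr); auto; nra.
  - apply (sphere_path_dGH_le M r p Hr Y cY y0 HcY); rewrite ?HY2; lra.
Qed.

Lemma joined_path_continuous t : 0 <= t <= 1 -> forall eps, 0 < eps ->
  exists delta, 0 < delta /\ forall s, 0 <= s <= 1 -> Rabs (s - t) < delta ->
    Rbar_lt (dGH (joined_path s) (joined_path t)) (Finite eps).
Proof.
  intros Ht eps Heps. exists (Rmin (1 / 8) (eps / (16 * r))).
  split; [apply Rmin_pos; [lra|apply Rdiv_lt_0_compat; lra]|]. intros s Hs Hst.
  pose proof (Rmin_l (1 / 8) (eps / (16 * r))) as Hd1.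
  pose proof (Rmin_r (1 / 8) (eps / (16 * r))) as Hd2.
  assert (Hb : 16 * r * Rabs (s - t) <= 2 * (eps / 2)).
  { apply (Rmult_le_compat_l (16 * r)) in Hd2; [|lra].
    replace (16 * r * (eps / (16 * r))) with eps in Hd2 by (field; lra). nra. }
  apply (Rbar_le_lt_trans _ (Finite (eps / 2))); [|simpl; lra].
  apply joined_path_dGH_le; auto; lra.
Qed.
End JoinedPath.

Lemma frequently_in_list (M : Type) (u : nat -> M) (l : list M) :
  frequently (fun n => In (u n) l) -> exists m, In m l /\ frequently (fun n => u n = m).
Proof.
  induction l as [|a l IH]; intros Hfreq.
  - destruct (Hfreq 0%nat) as (n & _ & []).
  - destruct (classic (frequently (fun n => u n = a))) as [Ha|Ha]; [exists a; now split; [left|]|].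
    unfold frequently in Ha. apply not_all_ex_not in Ha. destruct Ha as [N0 HN0].
    destruct IH as (m & Hm & Hmfreq); [|exists m; now split; [right|]].
    intros N. destruct (Hfreq (Nat.max N N0)) as (n & Hn & [Hna|Hnl]).
    + exfalso. apply HN0. exists n. split; [lia|easy].
    + exists n. split; [lia|easy].
Qed.

Lemma finite_space_compact (M : MetricSpace) : finite_space M -> compact_space M.
Proof.
  intros (l & _ & Hl) u.
  destruct (frequently_in_list M u l) as (m & _ & Hm); [intros N; exists N; split; auto|].
  destruct (subsequence_of_frequently _ Hm) as (phi & Hphi & Hum).
  exists phi, m. split; [exact Hphi|]. intros eps Heps. exists 0%nat. intros n _.
  now rewrite Hum, dist_refl.
Qed.

Lemma sM_gap (M : MetricSpace) a : Rbar_lt (Finite a) (sM M) ->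
  exists s0, a < s0 /\ forall m m' : M, m <> m' -> s0 <= dist m m'.
Proof.
  intros Ha. destruct (Finite_lt_Glb_Rbar _ _ Ha) as (s0 & Has & Hs).
  exists s0. split; [exact Has|]. intros m m' Hne. apply Hs. now exists m, m'.
Qed.

Lemma eM_gap (M : MetricSpace) a : Rbar_lt (Finite a) (eM M) ->
  exists e0, a < e0 /\ forall (f : M -> M) v, Injective f -> Surjective f ->
    (exists m, f m <> m) -> dis f = Finite v -> e0 <= v.
Proof.
  intros Ha. destruct (Finite_lt_Glb_Rbar _ _ Ha) as (e0 & Hae & He).
  exists e0. split; [exact Hae|]. intros f v Hinj Hsurj Hnid Hdis. apply He. now exists f.
Qed.

(* Only a point of [M] is taken from [generic M]. *)
Theorem corollary4 (M : MetricSpace) (r : R) :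
  finite_space M -> generic M ->
  0 < r ->
  Rbar_lt (Finite (4 * r)) (sM M) ->
  Rbar_lt (Finite (4 * r)) (eM M) ->
  Rbar_lt (Finite (6 * r)) (tM M) ->
  gh_path_connected (gh_sphere M r).
Proof.
  intros Hfin [[p _] _] Hr Hs He _.
  destruct (sM_gap M _ Hs) as (s0 & Hs0 & Hsep0).
  destruct (eM_gap M _ He) as (e0 & He0 & Hrigid).
  assert (Hsep : forall m m' : M, m <> m' -> 4 * r < dist m m').
  { intros m m' Hne. specialize (Hsep0 m m' Hne). lra. }
  assert (Hopt : forall X, gh_sphere M r X -> exists (cX : X -> M) (x0 : X),
    pointed_optimal_map M r p X cX x0).
  { intros X [_ HXr]. destruct (optimal_surjection M s0 e0 Hsep0 Hrigid X r Hr Hs0 He0 HXr)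
      as (cX & HsX & HdX).
    destruct (HsX p) as [x0 Hx0]. now exists cX, x0. }
  intros X Y HX HY.
  destruct (Hopt X HX) as (cX & x0 & HcX), (Hopt Y HY) as (cY & y0 & HcY).
  destruct HX as [[_ HXc] HXr], HY as [[_ HYc] HYr].
  pose proof (finite_space_compact M Hfin) as HM.
  exists (joined_path M r p X cX x0 Y cY y0). split; [|split; [|split]].
  - now apply joined_path_on_sphere.
  - now apply joined_path_continuous.
  - rewrite joined_path_0. apply dGH_refl. exact (inhabits x0).
  - rewrite joined_path_1. apply dGH_refl. exact (inhabits y0).
Qed.
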